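(* Let $\eta,\theta\in(0,1]$, let $k\ge2$, and let $C_{\rm out}\subseteq[Q]^n$ be a code of relative Hamming distance at least $1-\eta$. Let $C_{\rm in}\subseteq[k]^m$ be a code with $nQ$ codewords $e(i,\alpha)$, one for each $(i,\alpha)\in[n]\times[Q]$, such that for any two distinct codewords $c_1,c_2\in C_{\rm in}$ and any common subsequence $s$ of $c_1,c_2$ we have $\operatorname{span}s\ge(k+\sqrt k)\operatorname{len}s-\theta km$. Let $C_{\rm concat}\subseteq[k]^N$, $N=nm$, consist of, for each $c=(c_1,\dots,c_n)\in C_{\rm out}$, the word $e(1,c_1)e(2,c_2)\cdots e(n,c_n)$. Then \[\mathrm{LCS}(C_{\rm concat})\le\left(\frac2{k+\sqrt k}+2\theta+\eta\right)N.\]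
   Context: The relative Hamming distance of a code of block length $n$ is the minimum over distinct codewords $c,\tilde c$ of $\Delta(c,\tilde c)/n$, where $\Delta$ is the number of positions where they differ. Symbols are distinguishable positions. A common subsequence of words $w_1,w_2$ is a pair $s=(w_1',w_2')$ of subsequences equal as words; $\operatorname{len}s$ is their common length; the span of $w'$ in $w$ is the length of the shortest block of consecutive symbols of $w$ containing $w'$, and $\operatorname{span}s=\operatorname{span}_{w_1}w_1'+\operatorname{span}_{w_2}w_2'$. $\mathrm{LCS}(C)$ is the maximum over distinct codewords of the length of a longest common subsequence. *)

From HB Require Import structures.
From mathcomp Require Import all_boot all_order all_algebra.
From mathcomp Require Import reals.
Set Implicit Arguments. Unset Strict Implicit. Unset Printing Implicit Defensive.
Import Order.TTheory GRing.Theory Num.Theory.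

(* Words are sequences over an alphabet T.  A subsequence w' of a word w is
   represented by the strictly increasing list of (0-based) positions of w it
   uses (symbols are distinguishable positions). *)
Definition subseq_pos (T : Type) (w : seq T) (I : seq nat) : bool :=
  sorted ltn I && all (fun i => i < size w) I.

Definition common_subseq (T : eqType) (w1 w2 : seq T) (I1 I2 : seq nat) : bool :=
  [&& subseq_pos w1 I1, subseq_pos w2 I2, size I1 == size I2 &
      map (onth w1) I1 == map (onth w2) I2].

Definition cs_len (I1 I2 : seq nat) : nat := size I1.

Definition span_pos (I : seq nat) : nat :=
  if I is i :: _ then (last i I - i).+1 else 0.

Definition cs_span (I1 I2 : seq nat) : nat := span_pos I1 + span_pos I2.

Definition concat_word (n Q k : nat) (e : 'I_n -> 'I_Q -> seq 'I_k)
  (c : {ffun 'I_n -> 'I_Q}) : seq 'I_k :=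
  flatten [seq e i (c i) | i <- enum 'I_n].

Definition hamming (n Q : nat) (c c' : {ffun 'I_n -> 'I_Q}) : nat :=
  #|[set i | c i != c' i]|.

From HB Require Import structures.
From mathcomp Require Import all_boot all_order all_algebra.
From mathcomp Require Import reals.
From mathcomp Require Import zify ring lra.
Import Order.TTheory GRing.Theory Num.Theory.

Set Implicit Arguments.
Unset Strict Implicit.
Unset Printing Implicit Defensive.

(* The matched positions of a common subsequence form a chain of pairs (p, q)
   increasing strictly in both coordinates.  Cut the chain into maximal runs
   lying in one block pair (i, j) = (p / m, q / m).  If i = j and the outer
   codewords agree at i, the run has at most m pairs, and there are at most
   eta n such blocks.  Otherwise the run is a common subsequence of two
   distinct inner codewords, so (k + sqrt k) times its length is at most its
   span plus theta k m.  Successive runs have disjoint spans and strictly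
   larger i + j, so the spans add up to at most 2N and there are at most 2n
   runs.  The bookkeeping is an induction along the chain on a potential of
   (p, q): the room N - p + N - q left for spans, theta k m for each possible
   further increase of i + j, and (k + sqrt k) m for each agreeing block from
   max i j on. *)

Definition ltn_pair : rel (nat * nat) := fun x y => (x.1 < y.1) && (x.2 < y.2).

Lemma path_ltn_pair_last x u : path ltn_pair x u ->
  (x.1 <= (last x u).1) && (x.2 <= (last x u).2).
Proof.
elim: u x => [|y u IH] x /=; first by rewrite !leqnn.
by move=> /andP[/andP[xy1 xy2] /IH /andP[? ?]]; apply/andP; split; lia.
Qed.

Lemma path_zip_ltn_pair a b s t : size s = size t ->
  path ltn a s -> path ltn b t -> path ltn_pair (a, b) (zip s t).
Proof.
elim: s t a b => [|x s IH] [|y t] a b //= [st] /andP[ax ps] /andP[bt pt].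
by rewrite /ltn_pair /= ax bt IH.
Qed.

Lemma all_zip_eq_map (S T U : eqType) (f : S -> U) (g : T -> U) s t :
  map f s = map g t -> all (fun y => f y.1 == g y.2) (zip s t).
Proof. by elim: s t => [|x s IH] [|y t] //= [-> /IH ->]; rewrite eqxx. Qed.

Definition block (m : nat) (x : nat * nat) := (x.1 %/ m, x.2 %/ m).

Lemma ltn_mod_block m a b : a %/ m = b %/ m -> (a %% m < b %% m) = (a < b).
Proof. by move=> E; rewrite [in RHS](divn_eq a m) [in RHS](divn_eq b m) E ltn_add2l. Qed.

Lemma subn_mod_block m a b : a %/ m = b %/ m -> b %% m - a %% m = b - a.
Proof. by move=> E; rewrite [in RHS](divn_eq a m) [in RHS](divn_eq b m) E subnDl. Qed.

Lemma sorted_ltn_block_size m q s : 0 < m ->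
  sorted ltn s -> all (fun i => i %/ m == q) s -> size s <= m.
Proof.
move=> m_gt0 s_sorted s_q.
rewrite -(size_iota (q * m) m); apply: uniq_leq_size.
  by apply: sorted_uniq s_sorted; [exact: ltn_trans | exact: ltnn].
move=> i /(allP s_q) /eqP iq; rewrite mem_iota.
have := divn_eq i m; have := ltn_pmod i m_gt0; rewrite iq; lia.
Qed.

Lemma common_subseq_zip (T : eqType) (w1 w2 : seq T) I1 I2 :
  common_subseq w1 w2 I1 I2 ->
  [/\ sorted ltn_pair (zip I1 I2),
      all (fun y => (y.1 < size w1) && (y.2 < size w2)) (zip I1 I2),
      all (fun y => onth w1 y.1 == onth w2 y.2) (zip I1 I2)
    & size (zip I1 I2) = size I1].
Proof.
case/and4P=> /andP[I1_sorted I1_lt] /andP[I2_sorted I2_lt] /eqP I12 /eqP I12_eq.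
split; last by rewrite size_zip I12 minnn.
- case: I1 I2 I12 I1_sorted I2_sorted {I1_lt I2_lt I12_eq} => [|a I1] [|b I2] //= [].
  exact: path_zip_ltn_pair.
- apply/allP => y y_in; apply/andP; split.
    by apply: (allP I1_lt); rewrite -(unzip1_zip (eq_leq I12)); apply: map_f.
  by apply: (allP I2_lt); rewrite -(unzip2_zip (eq_leq (esym I12))); apply: map_f.
- exact: all_zip_eq_map.
Qed.

Lemma sorted_mod_block m q s : sorted ltn s -> all (fun i => i %/ m == q) s ->
  sorted ltn (map (modn^~ m) s).
Proof.
move=> s_sorted s_q; apply: (homo_sorted_in (e := ltn) (P := fun i => i %/ m == q)) => //.
by move=> i j /eqP iq /eqP jq; rewrite /= (ltn_mod_block (etrans iq (esym jq))).
Qed.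

Lemma span_pos_mod_block m q s : all (fun i => i %/ m == q) s ->
  span_pos (map (modn^~ m) s) = span_pos s.
Proof.
case: s => //= i s /andP[/eqP iq /allP s_q].
rewrite (last_map (modn^~ m)) subn_mod_block // iq.
by have /predU1P[-> | /s_q /eqP -> //] := mem_last i s.
Qed.

Lemma size_flatten_uniform (T : Type) m (ss : seq (seq T)) :
  all (fun s => size s == m) ss -> size (flatten ss) = size ss * m.
Proof. by elim: ss => //= s ss IH /andP[/eqP s_m /IH ss_m]; rewrite size_cat s_m ss_m mulSn. Qed.

Lemma onth_flatten_uniform (T : Type) m (ss : seq (seq T)) p : 0 < m ->
  all (fun s => size s == m) ss ->
  onth (flatten ss) p = onth (nth [::] ss (p %/ m)) (p %% m).
Proof.
move=> m_gt0; elim: ss p => [|s ss IH] p /=; first by rewrite nth_nil !onth0n.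
move=> /andP[/eqP s_m ss_m]; rewrite onth_cat s_m.
case: ltnP => [p_lt | m_le]; first by rewrite divn_small // modn_small.
by rewrite IH // -[p in RHS](subnK m_le) modnDr divnDr ?dvdnn // divnn m_gt0 addn1.
Qed.

Lemma run_coords_sorted x u : path ltn_pair x u ->
  sorted ltn (map fst (x :: u)) /\ sorted ltn (map snd (x :: u)).
Proof. by move=> xu_path; split; rewrite /= path_map; apply: sub_path xu_path => y z /andP[]. Qed.

Lemma run_coords_block m x u : all (fun y => block m y == block m x) u ->
  all (fun p => p %/ m == x.1 %/ m) (map fst (x :: u)) /\
  all (fun p => p %/ m == x.2 %/ m) (map snd (x :: u)).
Proof.
move=> u_block.
have y_block y : y \in u -> y.1 %/ m = x.1 %/ m /\ y.2 %/ m = x.2 %/ m.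
  by move=> /(allP u_block) /eqP /pair_equal_spec.
by split; rewrite /= eqxx /=; apply/allP => _ /mapP[y /y_block[y1 y2] ->]; rewrite /= ?y1 ?y2.
Qed.

Lemma run_size m x u : 0 < m -> path ltn_pair x u ->
  all (fun y => block m y == block m x) u -> (size u).+1 <= m.
Proof.
move=> m_gt0 /run_coords_sorted[fst_sorted _] /run_coords_block[fst_block _].
by rewrite -[(size u).+1](size_map fst (x :: u)); apply: sorted_ltn_block_size fst_block.
Qed.

Lemma split_prefix_all (T : Type) (p : pred T) s :
  exists u v, [/\ s = u ++ v, all p u & if v is y :: _ then ~~ p y else true].
Proof.
elim: s => [|x s [u [v [-> u_p v_head]]]]; first by exists [::], [::].
by case x_p: (p x); [exists (x :: u), v | exists [::], (x :: u ++ v)]; rewrite /= ?x_p.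
Qed.

Section Potential.

Variables (n m : nat) (A : {set 'I_n}).

Definition tail_card (a : nat) : nat := #|[set i in A | a <= i]|.

Lemma tail_card_le a b : a <= b -> tail_card b <= tail_card a.
Proof.
move=> ab; apply/subset_leq_card/subsetP => i.
by rewrite !inE => /andP[-> /(leq_trans ab) ->].
Qed.

Lemma tail_card_lt (i : 'I_n) b : i \in A -> i < b -> tail_card b < tail_card i.
Proof.
move=> iA ib; apply/proper_card/properP; split.
  by apply/subsetP => j; rewrite !inE => /andP[-> bj]; exact: ltnW (leq_trans ib bj).
by exists i; rewrite !inE iA //= -ltnNge.
Qed.

Lemma tail_card0 : tail_card 0 = #|A|.
Proof. by apply: eq_card => i; rewrite !inE andbT. Qed.

Definition in_range (x : nat * nat) : bool := (x.1 < n * m) && (x.2 < n * m).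

Lemma in_range_m_gt0 x : in_range x -> 0 < m.
Proof. by case/andP; case: m => //; rewrite muln0. Qed.

Definition diag_block (b : nat * nat) : bool := [exists i in A, b == (val i, val i)].

Local Open Scope ring_scope.

Variables (R : realType) (K c : R).
Hypotheses (K_ge0 : 0 <= K) (c_ge0 : 0 <= c).

Definition potential (x : nat * nat) : R :=
  ((n * m)%:R - x.1%:R) + ((n * m)%:R - x.2%:R)
  + c * ((2 * n)%:R - (x.1 %/ m)%:R - (x.2 %/ m)%:R)
  + K * m%:R * (tail_card (maxn (x.1 %/ m) (x.2 %/ m)))%:R.

Lemma potential0 : potential (0, 0) = 2 * (n * m)%:R + 2 * n%:R * c + K * m%:R * #|A|%:R.
Proof. by rewrite /potential /= div0n maxnn tail_card0; ring. Qed.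

Lemma potential_end_ge0 : 0 <= potential (n * m, n * m).
Proof.
have : (n * m %/ m + n * m %/ m <= 2 * n)%N.
  by case: m => [|m']; rewrite ?divn0 ?mulnK //; lia.
rewrite -(ler_nat R) natrD => q_le.
rewrite /potential /= !subrr !add0r; apply: addr_ge0; last by rewrite !mulr_ge0.
by apply: mulr_ge0 => //; lra.
Qed.

Lemma potential_antitone x y : (x.1 <= y.1)%N -> (x.2 <= y.2)%N ->
  potential y <= potential x.
Proof.
move=> xy1 xy2; rewrite /potential.
have := leq_div2r m xy1; have := leq_div2r m xy2.
move: (x.1 %/ m)%N (x.2 %/ m)%N (y.1 %/ m)%N (y.2 %/ m)%N => i j a b jb ia.
have tail_le : (tail_card (maxn a b) <= tail_card (maxn i j))%N.
  by apply: tail_card_le; lia.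
have c_le : c * ((2 * n)%:R - a%:R - b%:R) <= c * ((2 * n)%:R - i%:R - j%:R).
  by apply: ler_wpM2l => //; move: ia jb; rewrite -!(ler_nat R); lra.
have K_le : K * m%:R * (tail_card (maxn a b))%:R <= K * m%:R * (tail_card (maxn i j))%:R.
  by apply: ler_wpM2l; rewrite ?mulr_ge0 ?ler_nat.
by move: xy1 xy2; rewrite -!(ler_nat R); lra.
Qed.

Definition run_cost (x l : nat * nat) : R :=
  if diag_block (block m x) then K * m%:R
  else (l.1 - x.1)%N.+1%:R + (l.2 - x.2)%N.+1%:R + c.

Lemma potential_step x l y : (x.1 <= l.1)%N -> (x.2 <= l.2)%N -> ltn_pair l y ->
  block m y != block m x -> run_cost x l + potential y <= potential x.
Proof.
move=> xl1 xl2 /andP[ly1 ly2] yx; rewrite /run_cost /potential.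
have ia := leq_div2r m (leq_trans xl1 (ltnW ly1)).
have jb := leq_div2r m (leq_trans xl2 (ltnW ly2)).
have y1_ge : x.1%:R + (l.1 - x.1)%N.+1%:R <= y.1%:R :> R.
  by rewrite -natrD ler_nat; lia.
have y2_ge : x.2%:R + (l.2 - x.2)%N.+1%:R <= y.2%:R :> R.
  by rewrite -natrD ler_nat; lia.
have y_ge : x.1%:R + x.2%:R <= y.1%:R + y.2%:R :> R by rewrite -!natrD ler_nat; lia.
move: yx; rewrite /block xpair_eqE negb_and.
move: (x.1 %/ m)%N (x.2 %/ m)%N (y.1 %/ m)%N (y.2 %/ m)%N ia jb.
move=> i j a b ia jb ab.
have Km_ge0 : 0 <= K * m%:R by rewrite mulr_ge0.
have c_le (d : nat) : (i + j + d <= a + b)%N ->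
    c * ((2 * n)%:R - a%:R - b%:R) + c * d%:R <= c * ((2 * n)%:R - i%:R - j%:R).
  by rewrite -(ler_nat R) !natrD -mulrDr => ?; apply: ler_wpM2l => //; lra.
case: ifP => [/exists_inP[i0 i0A /eqP[ei ej]] | _].
  subst i j.
  have := c_le 0%N ltac:(lia); rewrite mulr0 addr0 maxnn => c_ineq.
  have : (tail_card (maxn a b)).+1%:R <= (tail_card i0)%:R :> R.
    by rewrite ler_nat; apply: tail_card_lt; lia.
  move=> /(ler_wpM2l Km_ge0); rewrite -addn1 natrD mulrDr mulr1 => K_ineq.
  lra.
have := c_le 1%N ltac:(lia); rewrite mulr1 => c_ineq.
have : K * m%:R * (tail_card (maxn a b))%:R <= K * m%:R * (tail_card (maxn i j))%:R.
  by apply: ler_wpM2l => //; rewrite ler_nat; apply: tail_card_le; lia.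
lra.
Qed.

Variable ok : pred (nat * nat).

Hypothesis offdiag_run_bound : forall x u, path ltn_pair x u ->
  all (fun y => block m y == block m x) u -> all in_range (x :: u) -> all ok (x :: u) ->
  ~~ diag_block (block m x) ->
  K * (size u).+1%:R <= ((last x u).1 - x.1)%N.+1%:R + ((last x u).2 - x.2)%N.+1%:R + c.

Lemma run_bound x u : path ltn_pair x u ->
  all (fun y => block m y == block m x) u -> all in_range (x :: u) -> all ok (x :: u) ->
  K * (size u).+1%:R <= run_cost x (last x u).
Proof.
move=> xu_path u_block xu_range xu_ok; rewrite /run_cost.
case: ifPn => [_ | offdiag]; last exact: offdiag_run_bound.
have m_gt0 : (0 < m)%N by case/andP: xu_range => /in_range_m_gt0.
by apply: ler_wpM2l => //; rewrite ler_nat; exact: run_size m_gt0 xu_path u_block.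
Qed.

Theorem potential_bound s : sorted ltn_pair s -> all in_range s -> all ok s ->
  K * (size s)%:R <= potential (head (n * m, n * m)%N s).
Proof.
elim: {s}(size s).+1 {-2}s (ltnSn (size s)) => // t IH [|x s] /= s_lt.
  by rewrite mulr0 => *; exact: potential_end_ge0.
move=> xs_path /andP[x_range s_range] /andP[x_ok s_ok].
have [u [v [s_uv u_block v_head]]] := split_prefix_all (fun z => block m z == block m x) s.
move: xs_path s_range s_ok s_lt; rewrite s_uv cat_path !all_cat size_cat.
move=> /andP[xu_path uv_path] /andP[u_range v_range] /andP[u_ok v_ok] uv_lt.
have /andP[xl1 xl2] := path_ltn_pair_last xu_path.
have xu_range : all in_range (x :: u) by rewrite /= x_range.
have xu_ok : all ok (x :: u) by rewrite /= x_ok.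
have := run_bound xu_path u_block xu_range xu_ok.
suff [y [l_lt_y y_block v_bound]] : exists y, [/\ ltn_pair (last x u) y,
    block m y != block m x & K * (size v)%:R <= potential y].
  have := potential_step xl1 xl2 l_lt_y y_block.
  rewrite -addSn natrD mulrDr; lra.
case: v v_head uv_path v_range v_ok uv_lt {s_uv} => [_ _ _ _ _ | y v y_block].
  exists (n * m, n * m)%N; split; last by rewrite mulr0 potential_end_ge0.
    exact: allP xu_range _ (mem_last x u).
  have m_gt0 := in_range_m_gt0 x_range.
  apply/eqP; rewrite /block /= mulnK // => -[x1_block _].
  by move: x_range => /andP[+ _]; rewrite -ltn_divLR // -x1_block ltnn.
move=> /andP[l_lt_y yv_path] yv_range yv_ok yv_lt.
exists y; split=> //; apply: (IH (y :: v)) => //.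
by rewrite ltnS in yv_lt; exact: leq_ltn_trans (leq_addl _ _) yv_lt.
Qed.

Corollary size_chain_le s : sorted ltn_pair s -> all in_range s -> all ok s ->
  K * (size s)%:R <= 2 * (n * m)%:R + 2 * n%:R * c + K * m%:R * #|A|%:R.
Proof.
move=> s_sorted s_range s_ok; rewrite -potential0.
apply: le_trans (potential_bound s_sorted s_range s_ok) _.
exact: potential_antitone.
Qed.

End Potential.

Section ConcatenatedCode.

Variables (n Q k m : nat) (e : 'I_n -> 'I_Q -> seq 'I_k).
Hypothesis size_e : forall i a, size (e i a) = m.

Let size_blocks (c : {ffun 'I_n -> 'I_Q}) :
  all (fun s => size s == m) [seq e i (c i) | i <- enum 'I_n].
Proof. by apply/allP => _ /mapP[i _ ->]; rewrite size_e. Qed.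

Lemma size_concat_word c : size (concat_word e c) = n * m.
Proof. by rewrite (size_flatten_uniform (size_blocks c)) size_map size_enum_ord. Qed.

Lemma onth_concat_word c (i : 'I_n) p : 0 < m -> p %/ m = i ->
  onth (concat_word e c) p = onth (e i (c i)) (p %% m).
Proof.
move=> m_gt0 p_i; rewrite (onth_flatten_uniform _ m_gt0 (size_blocks c)) p_i.
by rewrite (nth_map i) ?size_enum_ord // nth_ord_enum.
Qed.

Definition symbols_match (c1 c2 : {ffun 'I_n -> 'I_Q}) (y : nat * nat) : bool :=
  onth (concat_word e c1) y.1 == onth (concat_word e c2) y.2.

Lemma run_common_subseq c1 c2 x u (i j : 'I_n) : 0 < m ->
  path ltn_pair x u -> all (fun y => block m y == block m x) u ->
  block m x = (val i, val j) -> all (symbols_match c1 c2) (x :: u) ->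
  common_subseq (e i (c1 i)) (e j (c2 j))
    (map (modn^~ m) (map fst (x :: u))) (map (modn^~ m) (map snd (x :: u))).
Proof.
move=> m_gt0 xu_path u_block /pair_equal_spec[x1_block x2_block] xu_match.
have [fst_sorted snd_sorted] := run_coords_sorted xu_path.
have [] := run_coords_block u_block; rewrite x1_block x2_block => fst_block snd_block.
have mod_lt p : p %% m < m by rewrite ltn_pmod.
apply/and4P; split; rewrite ?size_map //.
- rewrite /subseq_pos (sorted_mod_block fst_sorted fst_block) size_e.
  by apply/allP => _ /mapP[p _ ->].
- rewrite /subseq_pos (sorted_mod_block snd_sorted snd_block) size_e.
  by apply/allP => _ /mapP[p _ ->].
apply/eqP; rewrite -!map_comp; apply/eq_in_map => y y_in /=.
have /eqP y1_block := allP fst_block _ (map_f fst y_in).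
have /eqP y2_block := allP snd_block _ (map_f snd y_in).
rewrite -!onth_concat_word //; exact/eqP/(allP xu_match).
Qed.

Definition agreement (c1 c2 : {ffun 'I_n -> 'I_Q}) : {set 'I_n} := [set i | c1 i == c2 i].

Lemma hamming_add_agreement c1 c2 : hamming c1 c2 + #|agreement c1 c2| = n.
Proof.
rewrite -[RHS]card_ord -(cardsC (agreement c1 c2)) addnC; congr (_ + _).
by apply: eq_card => i; rewrite !inE.
Qed.

Local Open Scope ring_scope.

Lemma card_agreement_le (R : realType) (eta : R) c1 c2 :
  (1 - eta) * n%:R <= (hamming c1 c2)%:R -> #|agreement c1 c2|%:R <= eta * n%:R.
Proof.
have := congr1 (GRing.natmul (1 : R)) (hamming_add_agreement c1 c2).
by rewrite natrD; lra.
Qed.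

Hypothesis e_inj : forall i a j b, e i a = e j b -> (i, a) = (j, b).

Variables (R : realType) (theta : R).
Hypothesis span_e : forall i a j b (I1 I2 : seq nat), e i a != e j b ->
  common_subseq (e i a) (e j b) I1 I2 ->
  (k%:R + Num.sqrt k%:R) * (cs_len I1 I2)%:R - theta * k%:R * m%:R <= (cs_span I1 I2)%:R.

Lemma concat_offdiag_run_bound c1 c2 x u : path ltn_pair x u ->
  all (fun y => block m y == block m x) u -> all (in_range n m) (x :: u) ->
  all (symbols_match c1 c2) (x :: u) -> ~~ diag_block (agreement c1 c2) (block m x) ->
  (k%:R + Num.sqrt k%:R) * (size u).+1%:R
    <= ((last x u).1 - x.1)%N.+1%:R + ((last x u).2 - x.2)%N.+1%:R + theta * k%:R * m%:R.
Proof.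
move=> xu_path u_block /andP[x_range _] xu_match offdiag.
have m_gt0 := in_range_m_gt0 x_range.
case/andP: x_range => x1_lt x2_lt.
have [i_lt j_lt] : (x.1 %/ m < n /\ x.2 %/ m < n)%N by rewrite !ltn_divLR.
set i := Ordinal i_lt; set j := Ordinal j_lt.
have x_block : block m x = (val i, val j) by [].
have e_neq : e i (c1 i) != e j (c2 j).
  apply: contra offdiag => /eqP /e_inj [ij c12]; apply/exists_inP.
  exists i; last by rewrite x_block /= -ij.
  by rewrite inE c12 (_ : j = i) //; apply: val_inj.
have := span_e e_neq (run_common_subseq m_gt0 xu_path u_block x_block xu_match).
have [fst_block snd_block] := run_coords_block u_block.
rewrite /cs_len /cs_span !size_map.
rewrite (span_pos_mod_block fst_block) (span_pos_mod_block snd_block) /=.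
by rewrite (last_map fst u x) (last_map snd u x) natrD lerBlDr.
Qed.

End ConcatenatedCode.

Local Open Scope ring_scope.

Theorem lemma5p1 (R : realType) (eta theta : R) (k n m Q : nat)
  (C_out : {set {ffun 'I_n -> 'I_Q}}) (e : 'I_n -> 'I_Q -> seq 'I_k) :
  0 < eta -> eta <= 1 -> 0 < theta -> theta <= 1 -> (2 <= k)%N ->
  (* C_out has relative Hamming distance at least 1 - eta *)
  (forall c c', c \in C_out -> c' \in C_out -> c != c' ->
     (1 - eta) * n%:R <= (hamming c c')%:R) ->
  (* C_in is a code in [k]^m with nQ distinct codewords e(i,alpha) *)
  (forall i a, size (e i a) = m) ->
  (forall i a j b, e i a = e j b -> (i, a) = (j, b)) ->
  (* span condition for distinct inner codewords *)
  (forall i a j b (I1 I2 : seq nat), e i a != e j b ->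
     common_subseq (e i a) (e j b) I1 I2 ->
     (k%:R + Num.sqrt k%:R) * (cs_len I1 I2)%:R - theta * k%:R * m%:R
       <= (cs_span I1 I2)%:R) ->
  (* LCS(C_concat) <= (2/(k+sqrt k) + 2 theta + eta) N, N = n m *)
  (forall c1 c2 (I1 I2 : seq nat), c1 \in C_out -> c2 \in C_out ->
     concat_word e c1 != concat_word e c2 ->
     common_subseq (concat_word e c1) (concat_word e c2) I1 I2 ->
     (cs_len I1 I2)%:R
       <= (2 / (k%:R + Num.sqrt k%:R) + 2 * theta + eta) * (n * m)%:R).
Proof.
move=> _ _ theta_gt0 _ k_ge2 dist_out size_e e_inj span_e.
move=> c1 c2 I1 I2 c1_in c2_in words_neq I12.
set K := k%:R + Num.sqrt k%:R.
have k_le_K : k%:R <= K by rewrite lerDl sqrtr_ge0.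
have K_gt0 : 0 < K by apply: lt_le_trans k_le_K; rewrite ltr0n; lia.
have c_ge0 : 0 <= theta * k%:R * m%:R by rewrite !mulr_ge0 // ltW.
have [zip_sorted zip_range zip_match zip_size] := common_subseq_zip I12.
rewrite !(size_concat_word size_e) in zip_range.
have := size_chain_le (ltW K_gt0) c_ge0
  (@concat_offdiag_run_bound _ _ _ _ _ size_e e_inj _ _ span_e c1 c2)
  zip_sorted zip_range zip_match.
rewrite zip_size => bound.
have c12 : c1 != c2 by apply: contraNneq words_neq => ->.
have agree_le := card_agreement_le (dist_out _ _ c1_in c2_in c12).
have agree_term := ler_wpM2l (mulr_ge0 (ltW K_gt0) (ler0n _ m)) agree_le.
have theta_term : 2 * n%:R * (theta * k%:R * m%:R) <= 2 * theta * (n * m)%:R * K.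
  have -> : 2 * n%:R * (theta * k%:R * m%:R) = 2 * theta * (n * m)%:R * k%:R.
    by rewrite natrM; ring.
  by rewrite ler_wpM2l // !mulr_ge0 // ltW.
rewrite /cs_len -(ler_pM2l K_gt0).
have -> : K * ((2 / K + 2 * theta + eta) * (n * m)%:R)
    = 2 * (n * m)%:R + 2 * theta * (n * m)%:R * K + K * m%:R * (eta * n%:R).
  by rewrite natrM; field; rewrite gt_eqF.
lra.
Qed.
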